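(* Let $(f,g)$ be a discrete Ribaucour pair of $(\mathfrak{m}^1,\mathfrak{m}^2)$-type. Then $f$ and $g$ are both spherical curves, i.e. for each of them there is a sphere (possibly a plane) containing all of its points.
   Context: Light cone model: $\mathbb{R}^{4,2}$ with a form $\langle\cdot,\cdot\rangle$ of signature $(4,2)$, light cone $\mathcal{L}$, $\mathbb{P}(\mathcal{L})$; fixed $\mathfrak{p}$ with $\langle\mathfrak{p},\mathfrak{p}\rangle=-1$; $v$ with $\langle\mathfrak{v},\mathfrak{p}\rangle=0$ are points of $\mathbb{R}^3\cup\{\infty\}$, others oriented spheres (planes included); incidence = orthogonality. Inversion in $\mathfrak{a}$: $\sigma_a(x)=x-\frac{2\langle x,\mathfrak{a}\rangle}{\langle\mathfrak{a},\mathfrak{a}\rangle}\mathfrak{a}$; M-inversion if $\mathfrak{a}\perp\mathfrak{p}$; $\sigma_a$ fixes exactly the vectors orthogonal to $\mathfrak{a}$. Discrete curves are maps from consecutive integers to points. A Ribaucour pair $(f,g)$: $f_i,f_j,g_j,g_i$ concircular for each edge $(ij)$; with representatives satisfying $\mathfrak{f}_i-\mathfrak{f}_j+\mathfrak{g}_j-\mathfrak{g}_i=0$ its R-evolution map consists of the M-inversions in $\mathfrak{r}_{ij}=\mathfrak{f}_i-\mathfrak{f}_j$. The pair is of $(\mathfrak{m}^1,\mathfrak{m}^2)$-type if $\mathrm{span}\{\mathfrak{m}^1,\mathfrak{m}^2,\mathfrak{p}\}$ is a 3-dimensional subspace consisting of fixed points of all inversions of the R-evolution map. *)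

From HB Require Import structures.
From mathcomp Require Import all_boot all_order all_algebra.
Set Implicit Arguments. Unset Strict Implicit. Unset Printing Implicit Defensive.
Import Order.TTheory GRing.Theory Num.Theory.
Local Open Scope ring_scope.

Section LightCone.
Variable R : rcfType.
Implicit Types (x y a v p : 'rV[R]_6).

Definition lor x y : R :=
  \sum_(i < 6) (if (i < 4)%N then 1 else -1) * x 0 i * y 0 i.

Definition inversion a x : 'rV[R]_6 := x - ((2 * lor x a) / lor a a) *: a.

(* a defines an M-inversion (w.r.t. the fixed timelike p): a is not null
   (so that sigma_a is an inversion) and a is orthogonal to p. *)
Definition is_Minversion p a : Prop := lor a a != 0 /\ lor a p = 0.

(* A point of P(L): a (nonzero) light-cone representative orthogonal to p. *)
Definition is_point p x : Prop := x != 0 /\ lor x x = 0 /\ lor x p = 0.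

(* An oriented sphere (planes included): a nonzero light-cone vector
   not orthogonal to p. *)
Definition is_sphere p x : Prop := x != 0 /\ lor x x = 0 /\ lor x p != 0.

Definition consecutive (D : {pred int}) : Prop :=
  forall i j k : int, i \in D -> k \in D -> i <= j <= k -> j \in D.

Definition discrete_curve p (D : {pred int}) (f : int -> 'rV[R]_6) : Prop :=
  consecutive D /\ forall i, i \in D -> is_point p (f i).

Definition edge (D : {pred int}) (i : int) : bool := (i \in D) && (i + 1 \in D).

(* Four points (given by representatives) are concircular iff their
   representatives are linearly dependent. *)
Definition concircular (a b c d : 'rV[R]_6) : Prop :=
  (\dim <<[:: a; b; c; d]>>%VS <= 3)%N.

Definition ribaucour_pair p D (f g : int -> 'rV[R]_6) : Prop :=
  [/\ discrete_curve p D f, discrete_curve p D g &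
      forall i, edge D i -> concircular (f i) (f (i + 1)) (g (i + 1)) (g i)].

Definition ribaucour_reps D (f g : int -> 'rV[R]_6) (lf lg : int -> R) : Prop :=
  (forall i, i \in D -> lf i != 0 /\ lg i != 0) /\
  forall i, edge D i ->
    lf i *: f i - lf (i + 1) *: f (i + 1) + lg (i + 1) *: g (i + 1)
      - lg i *: g i = 0.

Definition r_edge (f : int -> 'rV[R]_6) (lf : int -> R) (i : int) : 'rV[R]_6 :=
  lf i *: f i - lf (i + 1) *: f (i + 1).

(* The pair (f,g) is of (m1,m2)-type: for suitable representatives, the
   R-evolution map consists of M-inversions in r_{ij}, and
   span{m1,m2,p} is 3-dimensional and consists of fixed points of all
   these inversions. *)
Definition of_type p D (f g : int -> 'rV[R]_6) (m1 m2 : 'rV[R]_6) : Prop :=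
  exists lf lg : int -> R,
  [/\ ribaucour_reps D f g lf lg,
      forall i, edge D i -> is_Minversion p (r_edge f lf i),
      \dim <<[:: m1; m2; p]>>%VS = 3%N &
      forall i, edge D i -> forall v, v \in <<[:: m1; m2; p]>>%VS ->
        inversion (r_edge f lf i) v = v].

Definition spherical p (D : {pred int}) (f : int -> 'rV[R]_6) : Prop :=
  exists s, is_sphere p s /\ forall i, i \in D -> lor (f i) s = 0.

End LightCone.

From HB Require Import structures.
From mathcomp Require Import all_boot all_order all_algebra.
From mathcomp Require Import ring lra.
From Stdlib Require Import Classical_Prop.
Set Implicit Arguments. Unset Strict Implicit. Unset Printing Implicit Defensive.
Import Order.TTheory GRing.Theory Num.Theory.
Local Open Scope ring_scope.

(* The vectors fixed by the inversion in r_ij are those orthogonal to r_ij, so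
   <f_i, m> is constant along the curve for every m in span{m1, m2, p}; hence a
   nonzero combination q of m1, m2, p, corrected to be orthogonal to p, is
   orthogonal to all f_i. On p^perp the form has signature (4,1), where a null
   vector orthogonal to a non-spacelike q is a multiple of q. So, whatever the
   causal type of q, some spacelike e orthogonal to p is orthogonal to all f_i,
   and the sphere e + sqrt<e,e> p contains them. The same argument applies to
   g, because g_i - g_j = f_i - f_j on every edge (ij). *)

Lemma nontrivial_left_kernel (F : fieldType) m n (A : 'M[F]_(m, n)) :
  (n < m)%N -> exists2 x : 'rV_m, x != 0 & x *m A = 0.
Proof.
move=> lt_nm; have : kermx A != 0.
  by rewrite -mxrank_eq0 mxrank_ker subn_eq0 -ltnNge (leq_ltn_trans (rank_leq_col A)).
by case/rowV0Pn => x /sub_kermxP xA x_neq0; exists x.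
Qed.

Lemma sumr_sqr_eq0 (R : realDomainType) n (F : 'I_n -> R) :
  \sum_i F i ^+ 2 = 0 -> forall i, F i = 0.
Proof.
move=> sum0 i; apply/eqP; rewrite -sqrf_eq0; apply/eqP.
by apply: (psumr_eq0P _ sum0) => // j _; exact: sqr_ge0.
Qed.

Lemma eq_on_consecutive (T : Type) (D : {pred int}) (phi : int -> T) :
  consecutive D -> (forall i, edge D i -> phi i = phi (i + 1)) ->
  {in D &, forall i j, phi i = phi j}.
Proof.
move=> cD phiE.
have phi_up n i : i \in D -> i + n%:Z \in D -> phi i = phi (i + n%:Z).
  elim: n => [|n IHn] iD inD; first by rewrite addr0.
  have iD' : i + n%:Z \in D.
    by apply: (cD i _ (i + n.+1%:Z)) => //; rewrite lerDl lerD2l !lez_nat leqnSn.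
  have succE : i + n.+1%:Z = i + n%:Z + 1 by rewrite -addrA -PoszD addn1.
  by rewrite (IHn iD iD') succE; apply: phiE; rewrite /edge iD' -succE.
have phi_le i j : i <= j -> i \in D -> j \in D -> phi i = phi j.
  move=> ij iD jD; have jE : j = i + `|j - i|%N%:Z.
    by rewrite gez0_abs ?subr_ge0 // subrKC.
  by rewrite jE in jD *; apply: phi_up.
move=> i j iD jD; case: (lerP i j) => [|/ltW] ij; first exact: phi_le.
exact/esym/phi_le.
Qed.

Section LieSphereGeometry.
Variable R : rcfType.
Implicit Types (x y z w p q n e h s : 'rV[R]_6) (a b c : R).

Definition lor_sign (i : 'I_6) : R := if (i < 4)%N then 1 else -1.

Definition lor_dual y : 'rV[R]_6 := \row_i (lor_sign i * y 0 i).

Lemma lor_dualE x y : lor x y = \sum_i x 0 i * lor_dual y 0 i.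
Proof. by apply: eq_bigr => i _; rewrite mxE /lor_sign mulrCA mulrA. Qed.

Lemma lorC x y : lor x y = lor y x.
Proof. by apply: eq_bigr => i _; ring. Qed.

Lemma lorDl x y z : lor (x + y) z = lor x z + lor y z.
Proof. by rewrite /lor -big_split; apply: eq_bigr => i _; rewrite mxE mulrDr mulrDl. Qed.

Lemma lorZl a x z : lor (a *: x) z = a * lor x z.
Proof. by rewrite /lor mulr_sumr; apply: eq_bigr => i _; rewrite mxE; ring. Qed.

Lemma lorNl x z : lor (- x) z = - lor x z.
Proof. by rewrite -scaleN1r lorZl mulN1r. Qed.

Lemma lorBl x y z : lor (x - y) z = lor x z - lor y z.
Proof. by rewrite lorDl lorNl. Qed.

Lemma lorDr x y z : lor x (y + z) = lor x y + lor x z.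
Proof. by rewrite !(lorC x) lorDl. Qed.

Lemma lorZr a x z : lor x (a *: z) = a * lor x z.
Proof. by rewrite !(lorC x) lorZl. Qed.

Lemma lor0l z : lor 0 z = 0.
Proof. by rewrite -(scale0r 0) lorZl mul0r. Qed.

Lemma lor_dual_gt0 y : y != 0 -> 0 < lor y (lor_dual y).
Proof.
move=> y_neq0; have -> : lor y (lor_dual y) = \sum_i y 0 i ^+ 2.
  by rewrite lor_dualE; apply: eq_bigr => i _; rewrite !mxE /lor_sign; case: ifP => _; ring.
rewrite lt_def sumr_ge0 ?andbT => [|i _]; last exact: sqr_ge0.
apply: contra y_neq0 => /eqP /sumr_sqr_eq0 y0.
by apply/eqP/rowP => i; rewrite y0 mxE.
Qed.

Lemma lor_mulmxE x y : lor x y = (x *m (lor_dual y)^T) 0 0.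
Proof. by rewrite lor_dualE mxE; apply: eq_bigr => i _; rewrite !mxE. Qed.

Lemma exists_lor_orthogonal3 y1 y2 y3 :
  exists2 e, e != 0 & [/\ lor e y1 = 0, lor e y2 = 0 & lor e y3 = 0].
Proof.
pose A := row_mx (lor_dual y1)^T (row_mx (lor_dual y2)^T (lor_dual y3)^T).
have [e e_neq0 /eqP] := nontrivial_left_kernel A isT.
rewrite !mul_mx_row !row_mx_eq0 => /and3P[/eqP e1 /eqP e2 /eqP e3].
by exists e; rewrite // !lor_mulmxE e1 e2 e3 mxE.
Qed.

Lemma lor_splitE x y : lor x y =
  \sum_(i < 4) x 0 (lshift 2 i) * y 0 (lshift 2 i)
  - \sum_(j < 2) x 0 (rshift 4 j) * y 0 (rshift 4 j).
Proof.
rewrite /lor (@big_split_ord _ _ _ 4 2) /= -sumrN.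
by congr (_ + _); apply: eq_bigr => i _; rewrite ?ltn_ord ?ltnNge ?leq_addr /=; ring.
Qed.

Lemma lor_self_le0_eq0 w :
  (forall j : 'I_2, w 0 (rshift 4 j) = 0) -> lor w w <= 0 -> w = 0.
Proof.
move=> w45 ww_le0.
have ww : lor w w = \sum_(i < 4) w 0 (lshift 2 i) ^+ 2.
  rewrite lor_splitE [X in _ - X]big1 => [|j _]; last by rewrite w45 mul0r.
  by rewrite subr0; apply: eq_bigr => i _; rewrite expr2.
have w_lshift : forall i : 'I_4, w 0 (lshift 2 i) = 0.
  apply: sumr_sqr_eq0; apply/eqP; rewrite -ww eq_le ww_le0 ww.
  by rewrite sumr_ge0 // => i _; exact: sqr_ge0.
apply/rowP => k; rewrite mxE; case: (splitP (k : 'I_(4 + 2))) => [i|j] kE.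
- by rewrite -(w_lshift i); congr (w 0 _); apply: val_inj.
- by rewrite -(w45 j); congr (w 0 _); apply: val_inj.
Qed.

Lemma exists_comb3_rshift_eq0 u v w : exists a b c,
  [|| a != 0, b != 0 | c != 0] /\
  forall j : 'I_2, (a *: u + b *: v + c *: w) 0 (rshift 4 j) = 0.
Proof.
pose A : 'M[R]_(3, 2) := \matrix_(i, j) [:: u; v; w]`_i 0 (rshift 4 j).
have [k k_neq0 kA] := nontrivial_left_kernel A isT.
exists (k 0 ord0), (k 0 (lift ord0 ord0)), (k 0 (lift ord0 (lift ord0 ord0))); split.
  apply: contraNT k_neq0; rewrite !negb_or !negbK => /and3P[/eqP k0 /eqP k1 /eqP k2].
  apply/eqP/rowP => -[[|[|[|i]]] lt_i3] //; rewrite mxE;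
    [apply: etrans k0|apply: etrans k1|apply: etrans k2]; congr (k 0 _); exact: val_inj.
move=> j; have /rowP/(_ j) := kA; rewrite !mxE !big_ord_recl big_ord0 !mxE /= => <-.
by rewrite addr0 addrA.
Qed.

Lemma lor_causal_orthogonal_parallel p n x :
  lor p p < 0 -> n != 0 -> lor n p = 0 -> lor x p = 0 -> lor x n = 0 ->
  lor n n <= 0 -> lor x x <= 0 -> exists c, x = c *: n.
Proof.
move=> pp_lt0 n_neq0 np xp xn nn_le0 xx_le0.
(* span{p, n, x} is negative semidefinite, so it meets the positive definite
   subspace {x_4 = x_5 = 0} only in 0. *)
have [a [b [c [abc_neq0 w45]]]] := exists_comb3_rshift_eq0 p n x.
set w := a *: p + b *: n + c *: x in w45.
have ww : lor w w = a ^+ 2 * lor p p + b ^+ 2 * lor n n + c ^+ 2 * lor x x.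
  rewrite !(lorDl, lorDr, lorZl, lorZr) (lorC p n) (lorC p x) (lorC n x) np xp xn.
  ring.
have pp_term : a ^+ 2 * lor p p <= 0 by rewrite mulr_ge0_le0 ?sqr_ge0 ?ltW.
have nn_term : b ^+ 2 * lor n n <= 0 by rewrite mulr_ge0_le0 ?sqr_ge0.
have xx_term : c ^+ 2 * lor x x <= 0 by rewrite mulr_ge0_le0 ?sqr_ge0.
have w0 : w = 0 by apply: lor_self_le0_eq0; rewrite // ww; lra.
have a0 : a = 0.
  have : a ^+ 2 * lor p p = 0 by move: ww; rewrite w0 lor0l; lra.
  by move/eqP; rewrite mulf_eq0 (lt_eqF pp_lt0) orbF sqrf_eq0 => /eqP.
have c_neq0 : c != 0.
  apply: contraTneq abc_neq0 => c0; move: w0; rewrite /w a0 c0 !scale0r add0r addr0.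
  by move/eqP; rewrite scaler_eq0 (negbTE n_neq0) orbF => ->; rewrite eqxx.
exists (- b / c); apply: (scalerI c_neq0); rewrite scalerA mulrCA divff // mulr1.
by apply/eqP; rewrite scaleNr -addr_eq0 -w0 /w a0 scale0r add0r addrC.
Qed.

Lemma inversion_fixed_lor0 x y : lor y y != 0 -> inversion y x = x -> lor x y = 0.
Proof.
move=> yy_neq0 /eqP; rewrite /inversion subr_eq addrC -subr_eq subrr eq_sym.
rewrite scaler_eq0 => /orP[|/eqP y0]; last by rewrite y0 lor0l eqxx in yy_neq0.
by rewrite !mulf_eq0 invr_eq0 (negbTE yy_neq0) pnatr_eq0 orbF => /eqP.
Qed.

Section Spheres.
Variable p : 'rV[R]_6.
Hypothesis pp : lor p p = -1.

Lemma sphere_of_spacelike e :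
  lor e p = 0 -> 0 < lor e e -> is_sphere p (e + Num.sqrt (lor e e) *: p).
Proof.
move=> ep ee_gt0; set t := Num.sqrt (lor e e).
have t2 : t ^+ 2 = lor e e by rewrite sqr_sqrtr ?ltW.
have sp_neq0 : lor (e + t *: p) p != 0.
  by rewrite lorDl lorZl ep pp add0r mulrN1 oppr_eq0 sqrtr_eq0 -ltNge.
split; [|split] => //.
  by apply: contraNneq sp_neq0 => ->; rewrite lor0l.
rewrite !(lorDl, lorDr, lorZl, lorZr) (lorC p e) ep pp -t2; ring.
Qed.

Lemma exists_spacelike_normal q : q != 0 -> lor q p = 0 ->
  exists e, [/\ lor e p = 0, 0 < lor e e &
    forall h, lor h h = 0 -> lor h p = 0 -> lor h q = 0 -> lor h e = 0].
Proof.
move=> q_neq0 qp; have [qq_gt0|qq_le0] := ltrP 0 (lor q q).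
  by exists q; split=> // h _ _ /eqP; rewrite eq_sym => /eqP.
have pp_lt0 : lor p p < 0 by rewrite pp ltrN10.
(* Orthogonality to lor_dual q keeps e off the line of q, because
   <q, lor_dual q> is the Euclidean squared norm of q. *)
have [e e_neq0 [ep e_q eJq]] := exists_lor_orthogonal3 p q (lor_dual q).
have qJq_gt0 := lor_dual_gt0 q_neq0.
exists e; split=> // [|h hh hp hq].
  rewrite ltNge; move: e_neq0; apply: contraNN => ee_le0.
  have [c eE] := lor_causal_orthogonal_parallel pp_lt0 q_neq0 qp ep e_q qq_le0 ee_le0.
  move: eJq; rewrite eE lorZl => /eqP; rewrite mulf_eq0 (gt_eqF qJq_gt0) orbF => /eqP c0.
  by rewrite c0 scale0r.
have hh_le0 : lor h h <= 0 by rewrite hh.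
have [c ->] := lor_causal_orthogonal_parallel pp_lt0 q_neq0 qp hp hq qq_le0 hh_le0.
by rewrite lorZl lorC e_q mulr0.
Qed.

Lemma exists_sphere_orthogonal q : q != 0 -> lor q p = 0 ->
  exists s, is_sphere p s /\
    forall h, lor h h = 0 -> lor h p = 0 -> lor h q = 0 -> lor h s = 0.
Proof.
move=> q_neq0 qp; have [e [ep ee_gt0 eH]] := exists_spacelike_normal q_neq0 qp.
exists (e + Num.sqrt (lor e e) *: p); split; first exact: sphere_of_spacelike.
by move=> h hh hp hq; rewrite lorDr lorZr hp (eH h hh hp hq) mulr0 addr0.
Qed.

Definition orthogonal_steps (D : {pred int}) (H : int -> 'rV[R]_6) v :=
  forall i, edge D i -> lor (H i - H (i + 1)) v = 0.

Lemma exists_normal_in_span D H m1 m2 :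
  consecutive D -> free [:: m1; m2; p] -> {in D, forall i, lor (H i) p = 0} ->
  orthogonal_steps D H m1 -> orthogonal_steps D H m2 ->
  exists q, [/\ q != 0, lor q p = 0 & {in D, forall i, lor (H i) q = 0}].
Proof.
move=> cD free_m H_p H_m1 H_m2.
have lor_const v : orthogonal_steps D H v ->
    {in D &, forall i j, lor (H i) v = lor (H j) v}.
  move=> H_v; apply: eq_on_consecutive => // i /H_v /eqP.
  by rewrite lorBl subr_eq0 => /eqP.
have [a [b [ab_neq0 abH]]] : exists a b, ((a != 0) || (b != 0)) /\
    {in D, forall i, a * lor (H i) m1 + b * lor (H i) m2 = 0}.
  have [[i0 i0D]|D0] := classic (exists i0, i0 \in D); last first.
    by exists 1, 0; split=> [|i iD]; [rewrite oner_eq0 | case: D0; exists i].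
  have [c1_0|c1_neq0] := eqVneq (lor (H i0) m1) 0.
    exists 1, 0; split=> [|i iD]; first by rewrite oner_eq0.
    by rewrite (lor_const m1 H_m1 i i0) // c1_0 mulr0 mul0r addr0.
  exists (lor (H i0) m2), (- lor (H i0) m1); split=> [|i iD].
    by rewrite oppr_eq0 c1_neq0 orbT.
  by rewrite (lor_const m1 H_m1 i i0) // (lor_const m2 H_m2 i i0) //; ring.
set t := lor (a *: m1 + b *: m2) p.
exists (a *: m1 + b *: m2 + t *: p); split.
- apply: contraTneq ab_neq0 => q0.
  move: (freeP free_m (fun i => [:: a; b; t]`_i)).
  rewrite !big_ord_recl big_ord0 /= addr0 addrA q0 => /(_ erefl) k0.
  by have /= -> := k0 ord0; have /= -> := k0 (lift ord0 ord0); rewrite eqxx.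
- by rewrite lorDl lorZl pp mulrN1 subrr.
- move=> i iD; rewrite lorDr lorZr (H_p i iD) mulr0 addr0 lorDr !lorZr.
  exact: abH.
Qed.

Lemma spherical_of_orthogonal_steps D (l : int -> R) (h : int -> 'rV[R]_6)
    m1 m2 :
  consecutive D -> free [:: m1; m2; p] ->
  (forall i, i \in D -> l i != 0 /\ is_point p (h i)) ->
  orthogonal_steps D (fun i => l i *: h i) m1 ->
  orthogonal_steps D (fun i => l i *: h i) m2 ->
  spherical p D h.
Proof.
move=> cD free_m lh steps1 steps2.
have lh_null i : i \in D -> lor (l i *: h i) (l i *: h i) = 0.
  by case/lh => _ [_ [hh _]]; rewrite lorZl lorZr hh !mulr0.
have lh_p i : i \in D -> lor (l i *: h i) p = 0.
  by case/lh => _ [_ [_ hp]]; rewrite lorZl hp mulr0.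
have [q [q_neq0 qp qH]] := exists_normal_in_span cD free_m lh_p steps1 steps2.
have [s [s_sphere sH]] := exists_sphere_orthogonal q_neq0 qp.
exists s; split=> // i iD; have /eqP := sH _ (lh_null i iD) (lh_p i iD) (qH i iD).
by rewrite lorZl mulf_eq0 (negbTE (lh i iD).1) => /eqP.
Qed.

End Spheres.

End LieSphereGeometry.

Theorem corollary2p5 (R : rcfType) (p : 'rV[R]_6) (D : {pred int})
    (f g : int -> 'rV[R]_6) (m1 m2 : 'rV[R]_6) :
  lor p p = -1 ->
  ribaucour_pair p D f g ->
  of_type p D f g m1 m2 ->
  spherical p D f /\ spherical p D g.
Proof.
move=> pp [[cD f_pts] [_ g_pts] _] [lf [lg [[l_neq0 reps] r_minv dim3 r_fix]]].
have free_m : free [:: m1; m2; p] by rewrite /free dim3.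
have r_orth v : v \in <<[:: m1; m2; p]>>%VS ->
    orthogonal_steps D (fun i => lf i *: f i) v.
  move=> v_in i ei; rewrite lorC.
  exact: inversion_fixed_lor0 (r_minv i ei).1 (r_fix i ei v v_in).
have g_steps v : v \in <<[:: m1; m2; p]>>%VS ->
    orthogonal_steps D (fun i => lg i *: g i) v.
  move=> v_in i ei; rewrite -(r_orth v v_in i ei) /r_edge; congr (lor _ v).
  by have /eqP := reps i ei; rewrite -addrA addr_eq0 => /eqP ->; rewrite opprB.
have m1_in : m1 \in <<[:: m1; m2; p]>>%VS by rewrite memv_span ?mem_head.
have m2_in : m2 \in <<[:: m1; m2; p]>>%VS by rewrite memv_span // !inE eqxx orbT.
split.
- apply: (spherical_of_orthogonal_steps pp cD free_m (l := lf)); try exact: r_orth.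
  by move=> i iD; split; [exact: (l_neq0 i iD).1 | exact: f_pts].
- apply: (spherical_of_orthogonal_steps pp cD free_m (l := lg)); try exact: g_steps.
  by move=> i iD; split; [exact: (l_neq0 i iD).2 | exact: g_pts].
Qed.
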